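(* Let $G$ be a connected planar graph. Then every minimal $2$-contraction $H$ of $G$ either contains a non-damaged vertex of degree at most $4$, or is $3$-connected.
   Context: All graphs are finite, simple and undirected. A graph $H$ on at least $3$ vertices, together with an edge $u_1u_2\in E(H)$, is a $2$-contraction of $G$ with damaged vertices $u_1,u_2$ if $H\setminus u_1u_2$ (the graph $H$ with the edge $u_1u_2$ removed) is a subgraph of $G$, every vertex $v\in V(H)\setminus\{u_1,u_2\}$ satisfies $d_H(v)=d_G(v)$, and there exists a $(u_1,u_2)$-path in $G$ all of whose internal vertices lie in $V(G)\setminus V(H)$. The non-damaged vertices of $H$ are those of $V(H)\setminus\{u_1,u_2\}$. A $2$-contraction $H'$ of $G$ is smaller than a $2$-contraction $H$ with damaged vertices $\{u_1,u_2\}$ if $V(H')\subsetneq V(H)$ and each of $u_1,u_2$ either does not belong to $V(H')$ or is a damaged vertex of $H'$. A $2$-contraction $H$ of $G$ is minimal if $G$ admits no $2$-contraction smaller than $H$. *)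

From Stdlib Require Import Reals.
From mathcomp Require Import all_boot.

Set Implicit Arguments.
Unset Strict Implicit.
Unset Printing Implicit Defensive.

Section Graphs.
Variable T : finType.

Definition simple_graph (e : rel T) : Prop :=
  symmetric e /\ irreflexive e.

Definition graph_connected (e : rel T) : Prop :=
  forall x y : T, connect e x y.

Definition deg (r : rel T) (v : T) : nat := #|[set w | r v w]|.

(* Arcs are given by maps R -> R*R
   which are continuous on all of R (any continuous map on [0,1] extends
   constantly to such a map). *)
Definition in01 (t : R) : Prop := Rle R0 t /\ Rle t R1.

Definition planar (e : rel T) : Prop :=
  exists (pos : T -> R * R) (arc : T -> T -> R -> R * R),
    injective pos /\
    (forall x y, e x y ->
       continuity (fun t => fst (arc x y t)) /\
       continuity (fun t => snd (arc x y t)) /\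
       (forall s t, in01 s -> in01 t -> arc x y s = arc x y t -> s = t) /\
       arc x y R0 = pos x /\ arc x y R1 = pos y /\
       (forall z t, in01 t -> arc x y t = pos z -> z = x \/ z = y)) /\
    (forall x y x' y', e x y -> e x' y' ->
       ~ ((x' = x /\ y' = y) \/ (x' = y /\ y' = x)) ->
       forall s t, in01 s -> in01 t -> arc x y s = arc x' y' t ->
       exists z, arc x y s = pos z).

(* H = (VH, eH) with damaged vertices u1, u2 is a 2-contraction of G = (T, e). *)
Definition is_2contraction (e : rel T) (VH : {set T}) (eH : rel T)
    (u1 u2 : T) : Prop :=
  3 <= #|VH| /\
  simple_graph eH /\
  (forall x y, eH x y -> x \in VH /\ y \in VH) /\
  eH u1 u2 /\
  (forall x y, eH x y ->
     ~~ (((x == u1) && (y == u2)) || ((x == u2) && (y == u1))) -> e x y) /\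
  (forall v, v \in VH -> v != u1 -> v != u2 -> deg eH v = deg e v) /\
  (exists p : seq T, path e u1 (rcons p u2) && all (fun x => x \notin VH) p).

Definition smaller_2contraction (VH' : {set T}) (u1' u2' : T)
    (VH : {set T}) (u1 u2 : T) : Prop :=
  VH' \proper VH /\
  (u1 \notin VH' \/ u1 \in [set u1'; u2']) /\
  (u2 \notin VH' \/ u2 \in [set u1'; u2']).

Definition minimal_2contraction (e : rel T) (VH : {set T}) (eH : rel T)
    (u1 u2 : T) : Prop :=
  is_2contraction e VH eH u1 u2 /\
  ~ (exists (VH' : {set T}) (eH' : rel T) (u1' u2' : T),
        is_2contraction e VH' eH' u1' u2' /\
        smaller_2contraction VH' u1' u2' VH u1 u2).

Definition connected_on (S : {set T}) (r : rel T) : Prop :=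
  forall x y, x \in S -> y \in S ->
    connect [rel a b | r a b && (a \in S) && (b \in S)] x y.

Definition three_connected (VH : {set T}) (eH : rel T) : Prop :=
  3 < #|VH| /\
  forall X : {set T}, #|X| < 3 -> connected_on (VH :\: X) eH.

End Graphs.

From mathcomp Require Import all_boot.

Set Implicit Arguments.
Unset Strict Implicit.
Unset Printing Implicit Defensive.

(* Suppose a set X of at most two vertices separates H.  The damaged vertices
   are adjacent, so some component C of H - X contains neither of them.  Each
   vertex of C is non-damaged and hence has the same neighbours in G as in H,
   all of them in C or in X.  Since G is connected, C has a neighbour a in X.
   If a is the only vertex of X in H, then C + a, damaged at a and one of its
   neighbours in C, is a 2-contraction smaller than H; so H is 2-connected.
   If X meets H in {a, b}, 2-connectivity lets both a and b reach a second
   component of H - X, which yields an (a, b)-path of G avoiding C + a + b,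
   and C + a + b plus the edge ab is again a smaller 2-contraction. *)

Section InducedSubgraphs.
Variable T : finType.
Implicit Types (r : rel T) (S : {set T}).

Definition induced r S : rel T := [rel x y | r x y && (x \in S) && (y \in S)].

Definition add_edge r (a b : T) : rel T :=
  [rel x y | r x y || ((x == a) && (y == b)) || ((x == b) && (y == a))].

Lemma induced_sym r S : symmetric r -> symmetric (induced r S).
Proof. by move=> r_sym x y; rewrite /induced /= r_sym andbAC. Qed.

Lemma connect_induced_mem r S x y : connect (induced r S) x y -> x \in S -> y \in S.
Proof.
move=> /connectP[p + ->]; elim: p x => //= z p IHp x.
by move=> /andP[/andP[/andP[_ _] zS] zp] _; apply: IHp.
Qed.

Lemma connect_exit r (A : {pred T}) x y : connect r x y -> x \in A -> y \notin A ->
  exists u v, [/\ u \in A, v \notin A & r u v].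
Proof.
move=> /connectP[p + ->]; elim: p x => [|z p IHp] x /=; first by move=> _ ->.
move=> /andP[rxz zp] xA; have [zA|zA] := boolP (z \in A); first exact: IHp.
by exists x, z.
Qed.

Lemma add_edge_sym r a b : symmetric r -> symmetric (add_edge r a b).
Proof.
move=> r_sym x y; rewrite /add_edge /= r_sym -!orbA.
by rewrite (orbC (_ && _)) !(andbC (x == _)).
Qed.

Lemma add_edge_irr r a b : irreflexive r -> a != b -> irreflexive (add_edge r a b).
Proof.
move=> r_irr ab x; rewrite /add_edge /= r_irr.
by case: eqP => [->|_]; rewrite ?andbF // (negbTE ab).
Qed.

Lemma induced_add_edge_2contraction (e : rel T) S a b p :
  simple_graph e -> 3 <= #|S| -> a \in S -> b \in S -> a != b ->
  (forall v w, v \in S -> v != a -> v != b -> e v w -> w \in S) ->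
  path e a (rcons p b) -> all (fun x => x \notin S) p ->
  is_2contraction e S (induced (add_edge e a b) S) a b.
Proof.
move=> [e_sym e_irr] S3 aS bS ab S_closed ab_path p_out.
split=> //; split.
  split; first exact/induced_sym/add_edge_sym.
  by move=> x; rewrite /induced /= add_edge_irr.
split; first by move=> x y /andP[/andP[_ ->] ->].
split; first by rewrite /induced /add_edge /= !eqxx aS bS orbT.
split.
  move=> x y /andP[/andP[+ _] _] nab.
  by rewrite /add_edge /= -orbA (negbTE nab) orbF.
split; last by exists p; rewrite ab_path.
move=> v vS va vb; apply: eq_card => w; rewrite !inE /induced /add_edge /=.
rewrite (negbTE va) (negbTE vb) !orbF vS andbT.
by apply/andb_idr => /(S_closed v w vS va vb).
Qed.

End InducedSubgraphs.

Section TwoContraction.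
Variables (T : finType) (e eH : rel T) (VH : {set T}) (u1 u2 : T).
Hypothesis e_sym : symmetric e.
Hypothesis H2c : is_2contraction e VH eH u1 u2.
Hypothesis e_conn : graph_connected e.

Local Notation Hdel X := (induced eH (VH :\: X)).
Local Notation component X c := [set w | connect (Hdel X) c w].

Lemma eH_sym : symmetric eH. Proof. by case: H2c => _ [[]]. Qed.
Lemma eH_irr : irreflexive eH. Proof. by case: H2c => _ [[]]. Qed.
Lemma eH_mem x y : eH x y -> x \in VH /\ y \in VH.
Proof. by case: H2c => _ [_ [+ _]]; apply. Qed.
Lemma eH_u1u2 : eH u1 u2. Proof. by case: H2c => _ [_ [_ []]]. Qed.

Lemma deg_nondamaged v : v \in VH -> v != u1 -> v != u2 -> deg eH v = deg e v.
Proof. by case: H2c => _ [_ [_ [_ [_ [+ _]]]]]; apply. Qed.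

Lemma e_eH_nondamaged v w : v \in VH -> v != u1 -> v != u2 -> e v w = eH v w.
Proof.
move=> vV vu1 vu2; case: H2c => _ [_ [_ [_ [eH_e _]]]].
have nbr_sub : [set w | eH v w] \subset [set w | e v w].
  apply/subsetP => x; rewrite !inE => /eH_e; apply.
  by rewrite (negbTE vu1) (negbTE vu2).
have /eqP/setP/(_ w) : [set w | eH v w] == [set w | e v w].
  rewrite eqEcard nbr_sub -[#|[set w | eH v w]|]/(deg eH v) deg_nondamaged //.
  exact: leqnn.
by rewrite !inE => ->.
Qed.

Lemma eH_edge_lift (W : {set T}) s t : W \subset VH -> eH s t ->
  exists2 q, path e s (rcons q t) & all (fun x => x \notin W) q.
Proof.
case: H2c => _ [_ [_ [_ [eH_e [_ [p /andP[p_path p_out]]]]]]] WV st.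
have p_outW : all (fun x => x \notin W) p.
  by apply: sub_all p_out => x; apply: contra; apply: (subsetP WV).
have [/andP[/eqP-> /eqP->]|n12] := boolP ((s == u1) && (t == u2)); first by exists p.
have [/andP[/eqP-> /eqP->]|n21] := boolP ((s == u2) && (t == u1)).
  exists (rev p); last by rewrite all_rev.
  have := rev_path e u1 (rcons p u2).
  rewrite last_rcons belast_rcons rev_cons => ->.
  by rewrite (eq_path (e' := e)) // => x y; rewrite e_sym.
by exists [::]; rewrite //= andbT eH_e // negb_or n12 n21.
Qed.

Lemma eH_path_lift (W : {set T}) s q t : W \subset VH -> path eH s (rcons q t) ->
  all (fun x => x \notin W) q ->
  exists2 q', path e s (rcons q' t) & all (fun x => x \notin W) q'.
Proof.
move=> WV; elim: q s => [|x q IHq] s /=; first by rewrite andbT => /(eH_edge_lift WV).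
move=> /andP[sx xq] /andP[xW q_out].
have [q1 q1_path q1_out] := eH_edge_lift WV sx.
have [q2 q2_path q2_out] := IHq x xq q_out.
exists (q1 ++ x :: q2); last by rewrite all_cat /= q1_out xW q2_out.
by rewrite -cat_rcons rcons_cat cat_path q1_path last_rcons.
Qed.

Lemma damaged_connect X x y v w : x \in VH :\: X -> y \in VH :\: X ->
  v \in [set u1; u2] -> w \in [set u1; u2] ->
  connect (Hdel X) x v -> connect (Hdel X) y w -> connect (Hdel X) x y.
Proof.
move=> xS yS vU wU xv yw.
have Hsym := sym_connect_sym (induced_sym (VH :\: X) eH_sym).
have vS := connect_induced_mem xv xS; have wS := connect_induced_mem yw yS.
apply: connect_trans xv (connect_trans (y := w) _ _); last by rewrite Hsym.
move: vU wU vS wS => /set2P[]-> /set2P[]-> uS u'S; rewrite ?connect0 // connect1 //.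
  by rewrite /induced /= eH_u1u2 uS u'S.
by rewrite /induced /= eH_sym eH_u1u2 uS u'S.
Qed.

Lemma undamaged_component X x y : x \in VH :\: X -> y \in VH :\: X ->
  ~~ connect (Hdel X) x y ->
  exists c0 o, [/\ c0 \in VH :\: X, o \in VH :\: X, o \notin component X c0,
                   u1 \notin component X c0 & u2 \notin component X c0].
Proof.
move=> xS yS nxy.
have [/existsP[v /andP[vU xv]]|/existsPn x_free] :=
  boolP [exists v, (v \in [set u1; u2]) && connect (Hdel X) x v].
  have y_free w : w \in [set u1; u2] -> w \notin component X y.
    move=> wU; rewrite inE; apply: contra nxy => yw.
    exact: damaged_connect xS yS vU wU xv yw.
  exists y, x; split=> //; [|exact: y_free (set21 u1 u2)|exact: y_free (set22 u1 u2)].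
  by rewrite inE (sym_connect_sym (induced_sym (VH :\: X) eH_sym)).
exists x, y; split=> //; rewrite inE //.
  by have := x_free u1; rewrite set21.
by have := x_free u2; rewrite set22.
Qed.

Section Component.
Variables (X : {set T}) (c0 : T).
Hypothesis c0S : c0 \in VH :\: X.
Hypotheses (u1C : u1 \notin component X c0) (u2C : u2 \notin component X c0).

Lemma component_sub : component X c0 \subset VH :\: X.
Proof. by apply/subsetP => c; rewrite inE => /connect_induced_mem; apply. Qed.

Lemma component_e_closed c w : c \in component X c0 -> e c w ->
  w \in component X c0 \/ w \in X :&: VH.
Proof.
move=> cC cw; have cS := subsetP component_sub c cC.
have [cu1 cu2] : c != u1 /\ c != u2.
  by split; [apply: contraNneq u1C | apply: contraNneq u2C] => <-.
have /setDP[cV cX] := cS.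
rewrite (e_eH_nondamaged w cV cu1 cu2) in cw; have [_ wV] := eH_mem cw.
have [wX|wX] := boolP (w \in X); [right; by rewrite inE wX | left].
move: cC; rewrite !inE => /connect_trans; apply; apply: connect1.
by rewrite /induced /= cw cS inE wX wV.
Qed.

Lemma component_attachment o : o \notin component X c0 ->
  exists2 c, c \in component X c0 & exists2 a, a \in X :&: VH & e c a.
Proof.
move=> oC; have c0C : c0 \in component X c0 by rewrite inE connect0.
have [c [a [cC aC ca]]] := connect_exit (e_conn c0 o) c0C oC.
have [aC'|aXV] := component_e_closed cC ca; first by rewrite aC' in aC.
by exists c => //; exists a.
Qed.

End Component.

Section Minimal.
Hypothesis e_irr : irreflexive e.
Hypothesis H_min : ~ (exists (VH' : {set T}) (eH' : rel T) (u1' u2' : T),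
  is_2contraction e VH' eH' u1' u2' /\ smaller_2contraction VH' u1' u2' VH u1 u2).
Hypothesis deg_gt2 : forall v, v \in VH -> v != u1 -> v != u2 -> 2 < deg eH v.

(* If p avoided C + a + b, then C + a + b with the edge ab added would be a
   2-contraction of G smaller than H. *)
Lemma no_proper_fragment (C : {set T}) a b o c0 p :
  C \subset VH -> a \in VH -> b \in VH -> a != b ->
  u1 \notin C -> u2 \notin C -> c0 \in C -> o \in VH -> o \notin a |: (b |: C) ->
  (forall c w, c \in C -> e c w -> w \in a |: (b |: C)) ->
  path e a (rcons p b) -> ~ all (fun x => x \notin a |: (b |: C)) p.
Proof.
set S := a |: (b |: C) => CV aV bV ab u1C u2C c0C oV oS C_closed ab_path p_out.
have SV : S \subset VH by rewrite !subUset !sub1set aV bV CV.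
have c0V := subsetP CV c0 c0C.
have [c0u1 c0u2] : c0 != u1 /\ c0 != u2.
  by split; [apply: contraNneq u1C | apply: contraNneq u2C] => <-.
have S3 : 3 <= #|S|.
  apply: leq_trans (deg_gt2 c0V c0u1 c0u2) _; rewrite deg_nondamaged //.
  by apply/subset_leq_card/subsetP => w; rewrite inE; apply: C_closed.
have damaged_out v : v \notin C -> v \notin S \/ v \in [set a; b].
  by move=> vC; rewrite !inE (negbTE vC) orbF; case: (_ || _); [right|left].
apply: H_min; exists S, (induced (add_edge e a b) S), a, b; split.
  apply: (induced_add_edge_2contraction (conj e_sym e_irr) S3 (setU11 _ _)
    (setU1r _ (setU11 _ _)) ab _ ab_path p_out).
  move=> v w /setU1P[->|/setU1P[->|vC]]; rewrite ?eqxx // => _ _.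
  exact: C_closed.
by split; [apply/properP; split=> //; exists o | split; apply: damaged_out].
Qed.

Lemma connected_minus_le1 X : #|X :&: VH| <= 1 -> connected_on (VH :\: X) eH.
Proof.
move=> /card_le1_eqP X1 x y xS yS; apply: contraT => nxy; exfalso.
have [c0 [o [c0S oS oC u1C u2C]]] := undamaged_component xS yS nxy.
have [c cC [a aXV ca]] := component_attachment c0S u1C u2C oC.
have /setDP[cV cX] := subsetP (component_sub c0S) c cC.
have /setIP[aX aV] := aXV.
(* Damage C + a at a and at its neighbour c: the edge ca is the required path. *)
apply: (no_proper_fragment (a := a) (b := c) (o := o) (c0 := c0) (p := [::])
  (subset_trans (component_sub c0S) (subsetDl _ _)) aV cV _ u1C u2C _ _ _ _ _ _) => //.
- by apply: contraNneq cX => <-.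
- by rewrite inE connect0.
- by case/setDP: oS.
- apply/setU1P => -[oa|/setU1P[oc|oC']].
  + by move: oS; rewrite oa inE aX.
  + by move: oC; rewrite oc cC.
  + by rewrite oC' in oC.
- move=> c' w c'C c'w; case: (component_e_closed c0S u1C u2C c'C c'w) => [wC|wXV].
    by do 2 apply: setU1r.
  by rewrite (X1 w a wXV aXV) setU11.
- by rewrite /= e_sym ca.
Qed.

Lemma attachment_reaches X a b o : a != b -> X :&: VH = [set a; b] ->
  o \in VH :\: X -> exists2 d, connect (Hdel X) o d & eH d a.
Proof.
move=> ab XVab oS.
have /setIP[aX aV] : a \in X :&: VH by rewrite XVab set21.
have /setIP[bX bV] : b \in X :&: VH by rewrite XVab set22.
have b_only : #|[set b] :&: VH| <= 1.
  by rewrite (leq_trans (subset_leq_card (subsetIl _ _))) ?cards1.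
have o_b : o \in VH :\: [set b].
  by case/setDP: oS => oV oX; rewrite !inE oV andbT; apply: contraNneq oX => ->.
have a_b : a \in VH :\: [set b] by rewrite !inE ab.
have oC : o \in component X o by rewrite inE connect0.
have aC : a \notin component X o.
  by apply: contraL aX => /(subsetP (component_sub oS)) /setDP[].
have [d [v [dC vC /andP[/andP[dv _] /setDP[vV vb]]]]] :=
  connect_exit (connected_minus_le1 b_only o_b a_b) oC aC.
have dS := subsetP (component_sub oS) d dC.
rewrite inE in dC; exists d => //.
have [vX|vX] := boolP (v \in X).
  have /set2P[<-//|vb'] : v \in [set a; b] by rewrite -XVab inE vX vV.
  by rewrite vb' set11 in vb.
case/negP: vC; rewrite inE; apply: connect_trans dC (connect1 _).
by rewrite /induced /= dv dS inE vX vV.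
Qed.

Lemma connected_minus_lt3 (X : {set T}) : #|X| < 3 -> connected_on (VH :\: X) eH.
Proof.
move=> X2; have [|/card_gt1P[a [b [aXV bXV ab]]]] := leqP #|X :&: VH| 1.
  exact: connected_minus_le1.
have XVab : X :&: VH = [set a; b].
  apply/esym/eqP; rewrite eqEcard cards2 ab.
  rewrite (leq_trans (subset_leq_card (subsetIl X VH))) // andbT.
  by apply/subsetP => w /set2P[]->.
have XVba : X :&: VH = [set b; a] by rewrite XVab setUC.
move=> x y xS yS; apply: contraT => nxy; exfalso.
have [c0 [o [c0S oS oC u1C u2C]]] := undamaged_component xS yS nxy.
have [da oda daa] := attachment_reaches ab XVab oS.
have ba : b != a by rewrite eq_sym.
have [db odb dbb] := attachment_reaches ba XVba oS.
have Hsym := sym_connect_sym (induced_sym (VH :\: X) eH_sym).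
have /setIP[aX aV] := aXV; have /setIP[bX bV] := bXV.
set C := component X c0.
have CV : C \subset VH := subset_trans (component_sub c0S) (subsetDl _ _).
have far w : connect (Hdel X) o w -> w \notin a |: (b |: C).
  move=> ow; have /setDP[_ wX] := connect_induced_mem ow oS.
  apply/setU1P => -[wa|/setU1P[wb|wC]].
  - by rewrite wa aX in wX.
  - by rewrite wb bX in wX.
  - case/negP: oC; rewrite /C !inE in wC *.
    by apply: connect_trans wC _; rewrite Hsym.
have /connectP[p p_path p_last] : connect (Hdel X) da db.
  by apply: connect_trans odb; rewrite Hsym.
have ab_Hpath : path eH a (rcons (da :: p) b).
  rewrite /= rcons_path -p_last eH_sym daa dbb andbT /=.
  by apply: sub_path p_path => u v /andP[/andP[]].
have p_far : all (fun x => x \notin a |: (b |: C)) (da :: p).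
  apply/allP => w /(path_connect p_path) daw.
  by apply: far; apply: connect_trans oda daw.
have SV : a |: (b |: C) \subset VH by rewrite !subUset !sub1set aV bV CV.
have [q ab_path q_far] := eH_path_lift SV ab_Hpath p_far.
apply: (no_proper_fragment (o := o) (c0 := c0) CV aV bV ab u1C u2C _ _ _ _
  ab_path q_far).
- by rewrite /C inE connect0.
- by case/setDP: oS.
- exact/far/connect0.
- move=> c w cC cw; case: (component_e_closed c0S u1C u2C cC cw) => [wC|].
    by do 2 apply: setU1r.
  by rewrite XVab => /set2P[]->; rewrite ?setU11 // setU1r ?setU11.
Qed.

Lemma three_lt_card : 3 < #|VH|.
Proof.
have [v vV] : exists2 v, v \in VH & v \notin [set u1; u2].
  apply/subsetPn; case: H2c => VH3 _; apply: contraTN VH3 => /subset_leq_card.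
  by rewrite -ltnNge => /leq_ltn_trans; apply; rewrite cards2; case: (u1 != u2).
rewrite !inE negb_or => /andP[vu1 vu2].
apply: leq_trans (_ : 3 < #|v |: [set w | eH v w]|) (subset_leq_card _).
  by rewrite cardsU1 inE eH_irr add1n ltnS; apply: deg_gt2.
by rewrite subUset sub1set vV; apply/subsetP => w; rewrite inE => /eH_mem[].
Qed.

End Minimal.
End TwoContraction.

Theorem claim8 (T : finType) (e : rel T) :
  simple_graph e -> graph_connected e -> planar e ->
  forall (VH : {set T}) (eH : rel T) (u1 u2 : T),
    minimal_2contraction e VH eH u1 u2 ->
    (exists v, [/\ v \in VH, v != u1, v != u2 & deg eH v <= 4]) \/
    three_connected VH eH.
Proof.
move=> [e_sym e_irr] e_conn _ VH eH u1 u2 [H2c H_min].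
have [/existsP[v /and4P[vV vu1 vu2 small]]|/existsPn large] :=
  boolP [exists v, [&& v \in VH, v != u1, v != u2 & deg eH v <= 4]].
  by left; exists v.
have deg_gt2 v : v \in VH -> v != u1 -> v != u2 -> 2 < deg eH v.
  move=> vV vu1 vu2; have := large v; rewrite vV vu1 vu2 /= -ltnNge.
  exact: leq_trans.
right; split; first exact: three_lt_card H2c deg_gt2.
exact: connected_minus_lt3 e_sym H2c e_conn e_irr H_min deg_gt2.
Qed.
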